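(* Consider the setting described in the context and assume $D>2$. For $t\ge 1$ define $\mathcal{I}_0(t)=\bigcup_{m=0}^{t-1}\mathcal{F}_0(m)$, $\mathcal{I}_1(t)=\Big(\bigcup_{m=0}^{t-1}\mathcal{F}_{D-1}(m)\Big)\setminus \mathcal{I}_0(t)$, $\mathcal{I}_2(t)=V\setminus(\mathcal{I}_0(t)\cup\mathcal{I}_1(t))$. Then for every $t\ge1$: $\hat d_i(t)=m$ for all $i\in\mathcal{F}_0(m)$ with $0\le m<t$; $\hat d_i(t)=m$ for all $i\in\mathcal{F}_{D-1}(m)\cap\mathcal{I}_2(t)$; and $\hat d_i(t)\in\{t,t+1\}$ for all $i\in\mathcal{I}_1(t)$.
   Context: $G=(V,E)$ is a finite connected undirected graph with node set $V=\{0,\dots,N-1\}$; $\mathcal{N}(i)$ denotes the set of neighbours of $i$. Every edge has length $1$, $d_{ij}$ is the hop distance between $i$ and $j$, and $\mathcal{F}_k(m)=\{i\in V : d_{ik}=m\}$. The source set is $S(t)=\{D-1\}$ for $t\le 0$ and $S(t)=\{0\}$ for $t\ge 1$. The integer $D$ satisfies $\max_{i\in V}d_{i0}=D-1$, and nodes are labelled so that $0,1,\dots,D-1$ is a path in which node $i$ is a neighbour of $i+1$ with $d_{0,i}=i$ for $0\le i\le D-1$. Distance estimates evolve, for $t\ge1$, by $\hat d_i(t)=0$ if $i\in S(t)$ and $\hat d_i(t)=\min_{j\in\mathcal{N}(i)}\{\hat d_j(t-1)+1\}$ otherwise, with initial values $\hat d_i(0)=m$ for all $i\in\mathcal{F}_{D-1}(m)$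 (the steady state for source $D-1$). *)

From mathcomp Require Import all_boot all_order.
Set Implicit Arguments. Unset Strict Implicit. Unset Printing Implicit Defensive.

(* Node set V = {0,...,N-1} with N = n.+1, represented by 'I_n.+1. *)
Definition node (n k : nat) : 'I_n.+1 := inord k.

Section GraphDefs.
Variables (T : finType) (e : rel T).

Definition walk_len (k : nat) (i j : T) : bool :=
  [exists p : k.-tuple T, path e i p && (last i p == j)].

(* hop distance d_{ij}: least k with a k-edge walk from i to j
   (for a connected graph this is < #|T|). *)
Definition dist (i j : T) : nat :=
  find (fun k => walk_len k i j) (iota 0 #|T|).

Definition inF (k : T) (m : nat) (i : T) : bool := dist i k == m.

(* Distance estimates: s0 is the source for t >= 1 (node 0),
   s1 the source for t <= 0 (node D-1).
   dhat 0 i = d_{i,s1}; dhat (t+1) i = 0 if i = s0,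
   else min over neighbours j of dhat t j + 1.
   (The default #|T| of the min is only used for nodes without
   neighbours, which do not exist in a connected graph with >= 2 nodes.) *)
Fixpoint dhat (s0 s1 : T) (t : nat) (i : T) : nat :=
  match t with
  | 0 => dist i s1
  | t'.+1 => if i == s0 then 0
             else \big[minn/#|T|]_(j | e i j) (dhat s0 s1 t' j).+1
  end.

Definition I0 (s0 : T) (t : nat) (i : T) : bool := dist i s0 < t.
Definition I1 (s0 s1 : T) (t : nat) (i : T) : bool :=
  (dist i s1 < t) && ~~ I0 s0 t i.
Definition I2 (s0 s1 : T) (t : nat) (i : T) : bool :=
  ~~ I0 s0 t i && ~~ I1 s0 s1 t i.
End GraphDefs.

From mathcomp Require Import all_boot all_order.
From mathcomp Require Import zify.
Import Order.TTheory.
Set Implicit Arguments. Unset Strict Implicit.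

(* Two invariants pin the estimates down.  From below, by induction on t:
   a node within distance t of the new source 0 never reports less than its
   true distance to 0, and any other node reports at least max(t, d_{i,D-1}),
   because an estimate can drop by at most one per step.  From above, the
   update rule propagates estimates along walks: a walk of length k <= t from
   i to j gives dhat_i(t) <= dhat_j(t-k) + k.  Following shortest walks to 0,
   resp. towards D-1, gives the matching upper bounds, and at the old source
   D-1 itself the estimate bounces against a neighbour and so is at most t+1. *)

Section Distances.
Variables (T : finType) (e : rel T).

Lemma walk_len0 i j : walk_len e 0 i j = (i == j).
Proof.
apply/existsP/eqP => [[p]|->]; first by rewrite (tuple0 p) => /= /eqP.
by exists [tuple]; rewrite /=.
Qed.

Lemma walk_lenS k i x :
  walk_len e k.+1 i x = [exists j, e i j && walk_len e k j x].
Proof.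
apply/existsP/existsP => [[p]|[j /andP [eij /existsP [p /andP [pp lp]]]]].
  case/tupleP: p => j p /= /andP [/andP [eij pp] lp].
  by exists j; rewrite eij; apply/existsP; exists p; rewrite pp.
by exists [tuple of j :: p]; rewrite /= eij pp.
Qed.

Lemma walk_len_add k l i x : walk_len e (k + l) i x ->
  exists2 j, walk_len e k i j & walk_len e l j x.
Proof.
elim: k i => [|k IH] i; first by exists i; rewrite ?walk_len0.
rewrite addSn walk_lenS => /existsP [j /andP [eij /IH [y wjy wyx]]].
by exists y => //; rewrite walk_lenS; apply/existsP; exists j; rewrite eij.
Qed.

Hypothesis e_conn : forall i j : T, connect e i j.

Lemma has_walk_len i j : has (fun k => walk_len e k i j) (iota 0 #|T|).
Proof.
have /connectP [p pth ->] := e_conn i j.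
case/shortenP: pth => p' pth' uq _.
apply/hasP; exists (size p').
  rewrite mem_iota add0n.
  by have := max_card (mem (i :: p')); rewrite (card_uniqP uq).
by apply/existsP; exists (in_tuple p'); rewrite pth' eqxx.
Qed.

Lemma dist_lt_card i j : dist e i j < #|T|.
Proof. by rewrite /dist -[X in _ < X](size_iota 0) -has_find has_walk_len. Qed.

Lemma walk_len_dist i j : walk_len e (dist e i j) i j.
Proof.
have := nth_find 0 (has_walk_len i j).
by rewrite nth_iota ?add0n // dist_lt_card.
Qed.

Lemma dist_le_walk k i j : walk_len e k i j -> dist e i j <= k.
Proof.
move=> w; rewrite leqNgt; apply/negP => lt_k.
have kT : k < #|T| by apply: ltn_trans lt_k (dist_lt_card i j).
by have := before_find 0 lt_k; rewrite nth_iota ?add0n ?size_iota // w.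
Qed.

Lemma dist_refl i : dist e i i = 0.
Proof. by apply/eqP; rewrite -leqn0 dist_le_walk // walk_len0. Qed.

Lemma dist_le_edge i j x : e i j -> dist e i x <= (dist e j x).+1.
Proof.
move=> eij; apply: dist_le_walk.
by rewrite walk_lenS; apply/existsP; exists j; rewrite eij walk_len_dist.
Qed.

End Distances.

Section Estimates.
Variables (T : finType) (e : rel T) (s0 s1 : T).
Hypothesis e_conn : forall i j : T, connect e i j.

Local Notation dhat := (dhat e s0 s1).
Local Notation dist := (dist e).

Definition dhat_lower (t : nat) (i : T) : nat :=
  if dist i s0 < t then dist i s0 else maxn t (dist i s1).

Lemma dhatS t i : dhat t.+1 i =
  if i == s0 then 0 else \big[minn/#|T|]_(j | e i j) (dhat t j).+1.
Proof. by []. Qed.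

Lemma dhat_lower_le t i : dhat_lower t i <= dhat t i.
Proof.
elim: t i => [|t IH] i; first by rewrite /dhat_lower ltn0 max0n.
rewrite dhatS; case: eqP => [->|ne]; first by rewrite /dhat_lower dist_refl.
rewrite -minEnat; apply: (@le_bigmin _ nat) => [|j eij]; rewrite leEnat.
  rewrite /dhat_lower; have := dist_lt_card e_conn i s0.
  have := dist_lt_card e_conn i s1; case: ifP; lia.
have := IH j; have := dist_le_edge e_conn s0 eij.
have := dist_le_edge e_conn s1 eij.
by rewrite /dhat_lower; case: ifP; case: ifP; lia.
Qed.

Lemma dhat_step t i j : e i j -> dhat t.+1 i <= (dhat t j).+1.
Proof.
move=> eij; rewrite dhatS; case: eqP => // _.
by rewrite -minEnat; apply: (@bigmin_le_cond _ nat).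
Qed.

Lemma dhat_le_walk k t i j : walk_len e k i j -> k <= t ->
  dhat t i <= dhat (t - k) j + k.
Proof.
elim: k t i => [|k IH] t i; first by rewrite walk_len0 subn0 addn0 => /eqP ->.
rewrite walk_lenS => /existsP [y /andP [eiy wyj]].
case: t => // t; rewrite ltnS => kt.
by apply: leq_trans (dhat_step t eiy) _; rewrite subSS addnS ltnS IH.
Qed.

Lemma dhat_source t : 0 < t -> dhat t s0 = 0.
Proof. by case: t => //= t _; rewrite eqxx. Qed.

Lemma dhat_le_dist_source t i : dist i s0 < t -> dhat t i <= dist i s0.
Proof.
move=> lt_t; have := dhat_le_walk (walk_len_dist e_conn i s0) (ltnW lt_t).
by rewrite dhat_source ?subn_gt0.
Qed.

Lemma dhat_le_dist_old_source t i : t <= dist i s1 -> dhat t i <= dist i s1.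
Proof.
move=> le_t; have := walk_len_dist e_conn i s1.
rewrite -(subnKC le_t) => /walk_len_add [j wij wjs].
apply: leq_trans (dhat_le_walk wij (leqnn t)) _.
by rewrite subnn /= addnC leq_add2l (dist_le_walk e_conn wjs).
Qed.

Section OldSourceNeighbour.
Variable p : T.
Hypotheses (e_s1p : e s1 p) (e_ps1 : e p s1).

Lemma dhat_old_source_le t : dhat t s1 <= t.+1.
Proof.
suff: dhat t s1 <= t.+1 /\ dhat t p <= t.+1 by case.
elim: t => [|t [IHs IHp]].
  by have := dist_le_edge e_conn s1 e_ps1; rewrite /= !dist_refl.
split.
  by apply: leq_trans (dhat_step t e_s1p) _; rewrite ltnS.
by apply: leq_trans (dhat_step t e_ps1) _; rewrite ltnS.
Qed.

Lemma dhat_near_old_source_le t i : dist i s1 <= t -> dhat t i <= t.+1.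
Proof.
move=> le_t; have := dhat_le_walk (walk_len_dist e_conn i s1) le_t.
have := dhat_old_source_le (t - dist i s1); lia.
Qed.

End OldSourceNeighbour.
End Estimates.

Theorem lemma2 (n : nat) (e : rel 'I_n.+1) (D : nat)
  (e_sym : symmetric e) (e_irr : irreflexive e)
  (e_conn : forall i j : 'I_n.+1, connect e i j)
  (D_gt2 : 2 < D) (D_le : D <= n.+1)
  (D_ecc : (forall i, dist e i (node n 0) <= D.-1) /\
           (exists i, dist e i (node n 0) = D.-1))
  (path_edges : forall k, k < D.-1 -> e (node n k) (node n k.+1))
  (path_dist : forall k, k < D -> dist e (node n 0) (node n k) = k) :
  forall t : nat, 1 <= t ->
    [/\ forall (m : nat) (i : 'I_n.+1), m < t -> inF e (node n 0) m i ->
          dhat e (node n 0) (node n D.-1) t i = m,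
        forall (m : nat) (i : 'I_n.+1),
          inF e (node n D.-1) m i -> I2 e (node n 0) (node n D.-1) t i ->
          dhat e (node n 0) (node n D.-1) t i = m
      & forall i : 'I_n.+1, I1 e (node n 0) (node n D.-1) t i ->
          dhat e (node n 0) (node n D.-1) t i = t \/
          dhat e (node n 0) (node n D.-1) t i = t.+1].
Proof.
move=> t _; set s0 := node n 0; set s1 := node n D.-1.
have e_ps1 : e (node n D.-2) s1.
  by have := path_edges D.-2 ltac:(lia); have -> : (D.-2).+1 = D.-1 by lia.
have e_s1p : e s1 (node n D.-2) by rewrite e_sym.
have lower i := dhat_lower_le s0 s1 e_conn t i.
rewrite /inF /I2 /I1 /I0 /dhat_lower in lower *; split.
- move=> m i lt_mt /eqP d0; have := lower i; rewrite d0 lt_mt.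
  have := @dhat_le_dist_source _ e s0 s1 e_conn t i; rewrite d0 => /(_ lt_mt).
  lia.
- move=> m i /eqP d1 /andP [/negbTE far0 far1].
  rewrite far0 andbT -leqNgt in far1.
  have := lower i; have := dhat_le_dist_old_source s0 e_conn far1.
  rewrite far0 d1; lia.
- move=> i /andP [near1 /negbTE far0]; have := lower i; rewrite far0.
  have := dhat_near_old_source_le s0 e_conn e_s1p e_ps1 (ltnW near1); lia.
Qed.
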